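(* Let $(F,\mathrm{Frob})=\prod_{p\in\mathbb{P}}(\mathbb{F}_{p^{k_p}},\mathrm{Frob}_p)/\mathcal{U}$ be a member of the class $\mathcal{S}$. Then the coarse pseudofinite dimension $\pmb{\delta}_F$ with respect to $F$ takes integer values on all $\mathcal{L}_\sigma$-definable sets (with parameters) of $(F,\mathrm{Frob})$.
   Context: $\mathbb{P}$ is the set of primes; $\mathrm{Frob}_p$ is the map $x\mapsto x^p$. $\mathcal{L}_\sigma$ is the language of rings expanded by a unary function symbol $\sigma$ (interpreted by $\mathrm{Frob}_p$, resp. $\mathrm{Frob}$). For an $\mathcal{L}_\sigma$-formula $\varphi(x,y)$ without parameters and a prime $p$, $\varphi_p(x,y)$ is the ring formula obtained by replacing each occurrence of $\sigma(t)$ by $t^p$. By the theorem of Chatzidakis–van den Dries–Macintyre, for every ring formula $\psi(x,y)$ with $|x|=n$ there are a constant $C_\psi>0$ and a finite set $D_\psi\subseteq\{0,\dots,n\}\times\mathbb{R}^{>0}$ such that for every finite field $\mathbb{F}_q$ and $a\in\mathbb{F}_q^{|y|}$ with $\psi(\mathbb{F}_q^n,a)\neq\emptyset$ there is $(d,\mu)\in D_\psi$ with $\big||\psi(\mathbb{F}_q^n,a)|-\mu q^d\big|\le C_\psi q^{d-1/2}$; fix such $C_\psi,D_\psi$ for each $\psi$, and let $E_\psi=\{\mu:(d,\mu)\in D_\psi\}$. Put $N^p_{\varphi}=\max\{\mu,1/\mu,2\log_p(2C_{\varphi_p}/\mu):\mu\in E_{\varphi_p}\}$ and $f(\ell,p)=\max\{N^p_\varphi:\varphi(x,y)\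 \mathcal{L}_\sigma\text{-formula without parameters},\ |\varphi|\le\ell\}$, where $|\varphi|$ is the length of $\varphi$. The class $\mathcal{S}$ consists of all ultraproducts $\prod_{p\in\mathbb{P}}(\mathbb{F}_{p^{k_p}},\mathrm{Frob}_p)/\mathcal{U}$ with $\mathcal{U}$ a non-principal ultrafilter on $\mathbb{P}$ and $k_p\ge f(p,p)$ for all $p$. For an ultraproduct $M$ of finite structures, an internal set $D=\prod D_i/\mathcal{U}$ has nonstandard cardinality $|D|=(|D_i|)/\mathcal{U}\in\mathbb{R}^*$; for an internal set $X$ and a definable set $A$, $\pmb{\delta}_X(A)=\mathrm{st}(\log|A|/\log|X|)$ (standard part); $\pmb{\delta}_F$ is $\pmb{\delta}_X$ with $X=F$. *)

From Stdlib Require Import Reals ClassicalEpsilon.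
From mathcomp Require Import all_boot all_algebra.
Set Implicit Arguments. Unset Strict Implicit. Unset Printing Implicit Defensive.

Inductive Lterm : Type :=
| TVar of nat | TZero | TOne
| TAdd of Lterm & Lterm | TNeg of Lterm | TMul of Lterm & Lterm
| TSig of Lterm.

Inductive Lform : Type :=
| FEq of Lterm & Lterm | FNot of Lform | FAnd of Lform & Lform
| FEx of nat & Lform.

Fixpoint tsize (t : Lterm) : nat :=
  match t with
  | TVar _ | TZero | TOne => 1
  | TAdd s u | TMul s u => (tsize s + tsize u).+1
  | TNeg s | TSig s => (tsize s).+1
  end.
Fixpoint fsize (f : Lform) : nat :=
  match f with
  | FEq s t => (tsize s + tsize t).+1
  | FNot g => (fsize g).+1
  | FAnd g h => (fsize g + fsize h).+1
  | FEx _ g => (fsize g).+2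
  end.

Fixpoint tvars (t : Lterm) : seq nat :=
  match t with
  | TVar i => [:: i]
  | TZero | TOne => [::]
  | TAdd s u | TMul s u => tvars s ++ tvars u
  | TNeg s | TSig s => tvars s
  end.
Fixpoint ffv (f : Lform) : seq nat :=
  match f with
  | FEq s t => tvars s ++ tvars t
  | FNot g => ffv g
  | FAnd g h => ffv g ++ ffv h
  | FEx i g => [seq j <- ffv g | j != i]
  end.
(* phi(x,y) with |x| = n, |y| = m : free variables among x_0..x_{n-1} = var 0..n-1,
   y_0..y_{m-1} = var n..n+m-1 *)
Definition fv_below (N : nat) (f : Lform) : bool := all (fun i => i < N) (ffv f).

Fixpoint tsigfree (t : Lterm) : bool :=
  match t with
  | TVar _ | TZero | TOne => true
  | TAdd s u | TMul s u => tsigfree s && tsigfree u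
  | TNeg s => tsigfree s
  | TSig _ => false
  end.
Fixpoint fsigfree (f : Lform) : bool :=
  match f with
  | FEq s t => tsigfree s && tsigfree t
  | FNot g => fsigfree g
  | FAnd g h => fsigfree g && fsigfree h
  | FEx _ g => fsigfree g
  end.

Fixpoint tpow (t : Lterm) (n : nat) : Lterm :=
  match n with 0 => TOne | n'.+1 => TMul t (tpow t n') end.
Fixpoint tsubp (p : nat) (t : Lterm) : Lterm :=
  match t with
  | TVar i => TVar i | TZero => TZero | TOne => TOne
  | TAdd s u => TAdd (tsubp p s) (tsubp p u)
  | TMul s u => TMul (tsubp p s) (tsubp p u)
  | TNeg s => TNeg (tsubp p s)
  | TSig s => tpow (tsubp p s) p
  end.
Fixpoint fsubp (p : nat) (f : Lform) : Lform :=
  match f with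
  | FEq s t => FEq (tsubp p s) (tsubp p t)
  | FNot g => FNot (fsubp p g)
  | FAnd g h => FAnd (fsubp p g) (fsubp p h)
  | FEx i g => FEx i (fsubp p g)
  end.

(* ---------- Semantics in an L_sigma-structure (carrier with a congruence) ---------- *)
Record sigstr := SigStr {
  s_car :> Type;
  s_eq : s_car -> s_car -> Prop;
  s_zero : s_car; s_one : s_car;
  s_add : s_car -> s_car -> s_car; s_mul : s_car -> s_car -> s_car;
  s_opp : s_car -> s_car; s_sig : s_car -> s_car }.

Fixpoint teval (S : sigstr) (e : nat -> S) (t : Lterm) : S :=
  match t with
  | TVar i => e i
  | TZero => s_zero S | TOne => s_one S
  | TAdd s u => s_add (teval e s) (teval e u)
  | TMul s u => s_mul (teval e s) (teval e u)
  | TNeg s => s_opp (teval e s)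
  | TSig s => s_sig (teval e s)
  end.
Fixpoint holds (S : sigstr) (e : nat -> S) (f : Lform) : Prop :=
  match f with
  | FEq s t => @s_eq S (teval e s) (teval e t)
  | FNot g => ~ holds e g
  | FAnd g h => holds e g /\ holds e h
  | FEx i g => exists v : S, holds (fun j => if j == i then v else e j) g
  end.

Definition env_xy (T : Type) (d : T) (n m : nat) (x : 'I_n -> T) (y : 'I_m -> T)
  : nat -> T := fun i =>
  if (insub i : option 'I_n) is Some j then x j
  else if (insub (i - n) : option 'I_m) is Some j then y j else d.

Definition pb (P : Prop) : bool := if excluded_middle_informative P then true else false.

Definition ffstr (K : finFieldType) (p : nat) : sigstr :=
  @SigStr K (@eq K) 0%R 1%R (@GRing.add K) (@GRing.mul K) (@GRing.opp K)
    (fun x => (x ^+ p)%R).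

Definition nsols (K : finFieldType) (p : nat) (psi : Lform) (n m : nat) (a : 'I_m -> K) : nat :=
  #|[set x : {ffun 'I_n -> K} | pb (holds (S := ffstr K p) (env_xy 0%R x a) psi)]|.

Section RealDefs.
Local Open Scope R_scope.
Definition CDM_constants (C : Lform -> nat -> nat -> R) (D : Lform -> nat -> nat -> seq (nat * R)%type) : Prop :=
  forall psi n m, fsigfree psi -> fv_below (n + m) psi ->
    (0 < C psi n m) /\
    (forall d mu, List.In (d, mu) (D psi n m) -> (d <= n)%N /\ (0 < mu)) /\
    (forall (K : finFieldType) (a : 'I_m -> K),
        (0 < nsols 1%N psi n a)%N ->
        exists d mu, List.In (d, mu) (D psi n m) /\
          (Rabs (INR (nsols 1%N psi n a) - mu * INR #|K| ^ d)
             <= C psi n m * Rpower (INR #|K|) (INR d - 1 / 2))).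

(* k >= f(p,p) = max { N^p_phi : |phi| <= p }, written as: k >= N^p_phi for all such phi,
   where N^p_phi = max { mu, 1/mu, 2 log_p (2 C_{phi_p} / mu) : mu in E_{phi_p} } *)
Definition k_large (C : Lform -> nat -> nat -> R) (D : Lform -> nat -> nat -> seq (nat * R)%type)
  (k p : nat) : Prop :=
  forall phi n m, fv_below (n + m) phi -> (fsize phi <= p)%N ->
    forall mu, (exists d, List.In (d, mu) (D (fsubp p phi) n m)) ->
      (mu <= INR k) /\ (1 / mu <= INR k) /\
      (2 * (ln (2 * C (fsubp p phi) n m / mu) / ln (INR p)) <= INR k).

End RealDefs.

Definition ultrafilter (U : (nat -> Prop) -> Prop) : Prop :=
  U (fun _ => True) /\ ~ U (fun _ => False) /\
  (forall A B : nat -> Prop, U A -> (forall i, A i -> B i) -> U B) /\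
  (forall A B : nat -> Prop, U A -> U B -> U (fun i => A i /\ B i)) /\
  (forall A : nat -> Prop, U A \/ U (fun i => ~ A i)).
Definition nonprincipal (U : (nat -> Prop) -> Prop) : Prop :=
  forall n : nat, ~ U (fun i => i = n).

Definition ultraprod (U : (nat -> Prop) -> Prop) (K : nat -> finFieldType) : sigstr :=
  @SigStr (forall p, K p) (fun x y => U (fun p => x p = y p))
    (fun p => 0%R) (fun p => 1%R)
    (fun x y p => (x p + y p)%R) (fun x y p => (x p * y p)%R)
    (fun x p => (- x p)%R) (fun x p => (x p ^+ p)%R).

Definition definable (S : sigstr) (n : nat) (A : ('I_n -> S) -> Prop) : Prop :=
  exists (phi : Lform) (m : nat) (a : 'I_m -> S),
    fv_below (n + m) phi /\
    forall x : 'I_n -> S, A x <-> holds (env_xy (@s_zero S) x a) phi.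

Definition internal_rep (U : (nat -> Prop) -> Prop) (K : nat -> finFieldType) (n : nat)
  (A : ('I_n -> ultraprod U K) -> Prop) (Dset : forall p, {set {ffun 'I_n -> K p}}) : Prop :=
  forall x : 'I_n -> ultraprod U K, A x <-> U (fun p => [ffun i => x i p] \in Dset p).

Section RealDefs2.
Local Open Scope R_scope.
(* st(x) = r for x = (x_p)/U in R^* *)
Definition st_eq (U : (nat -> Prop) -> Prop) (x : nat -> R) (r : R) : Prop :=
  forall eps, (0 < eps) -> U (fun p => (Rabs (x p - r) < eps)).

(* delta_F(A) = st(log|A| / log|F|) = r, with |A| = (|Dset_p|)/U, |F| = (|K p|)/U *)
Definition delta_F_eq (U : (nat -> Prop) -> Prop) (K : nat -> finFieldType) (n : nat)
  (Dset : forall p, {set {ffun 'I_n -> K p}}) (r : R) : Prop :=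
  st_eq U (fun p => ln (INR #|Dset p|) / ln (INR #|K p|)) r.
End RealDefs2.

(* Substituting x^p for σ turns an L_σ-formula φ into a ring formula φ_p with the same
   realisations in (F_q, Frob_p), q = p^(k_p).  By Chatzidakis–van den Dries–Macintyre their
   number N_p is μ q^d up to an error C q^(d-1/2); the choice k_p ≥ f(p,p) makes the error at
   most half of μ q^d and bounds μ and 1/μ by k_p, so log N_p / log q lies within 2 / log p of
   the integer d ≤ n.  By Łoś's theorem the definable set is the internal set of these
   realisations; the ultrafilter selects one value of d, and since it is nonprincipal,
   2 / log p becomes arbitrarily small along it, hence δ_F = d. *)

From Stdlib Require Import Reals ZArith Lra ClassicalEpsilon FunctionalExtensionality.
From mathcomp Require Import all_boot all_algebra.
Set Implicit Arguments. Unset Strict Implicit. Unset Printing Implicit Defensive.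
Import GRing.Theory.

Section RealEstimates.
Local Open Scope R_scope.

Lemma ln_le x y : 0 < x -> x <= y -> ln x <= ln y.
Proof. by move=> x0 [xy | <-]; [apply/Rlt_le/ln_increasing | apply: Rle_refl]. Qed.

Lemma ln_lt_id x : 0 < x -> ln x < x.
Proof. by move=> x0; have := exp_ineq1_le (ln x); rewrite exp_ln //; lra. Qed.

Lemma ln_gt0 x : 1 < x -> 0 < ln x.
Proof. by move=> x1; rewrite -ln_1; apply: ln_increasing; lra. Qed.

Lemma Rpower_pow_half_ge (P r : R) (k : nat) :
  1 < P -> 0 < r -> 2 * (ln r / ln P) <= INR k -> r <= Rpower (P ^ k) (1 / 2).
Proof.
move=> P1 r0 hk; have lnP := ln_gt0 P1.
have -> : r = Rpower P (ln r / ln P).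
  by rewrite /Rpower (_ : ln r / ln P * ln P = ln r) ?exp_ln //; field; lra.
rewrite -Rpower_pow; last lra.
by rewrite Rpower_mult; apply: Rle_Rpower; lra.
Qed.

Lemma pow_approx_sandwich (Q mu Cc N : R) (d : nat) :
  0 < Q -> 0 < mu -> 2 * Cc / mu <= Rpower Q (1 / 2) ->
  Rabs (N - mu * Q ^ d) <= Cc * Rpower Q (INR d - 1 / 2) ->
  mu / 2 * Q ^ d <= N <= 3 * mu / 2 * Q ^ d.
Proof.
move=> Q0 mu0 hC hN.
suff : Rabs (N - mu * Q ^ d) <= mu / 2 * Q ^ d.
  have := Rle_abs (N - mu * Q ^ d); have := Rle_abs (- (N - mu * Q ^ d)).
  by rewrite Rabs_Ropp; lra.
apply: (Rle_trans _ _ _ hN).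
set s := Rpower Q (1 / 2) in hC *.
have s0 : 0 < s := exp_pos _.
have Qd0 : 0 < Q ^ d := pow_lt _ _ Q0.
have -> : Rpower Q (INR d - 1 / 2) = Q ^ d / s.
  by rewrite /Rminus Rpower_plus Rpower_pow // Rpower_Ropp.
have Cs : Cc / s <= mu / 2.
  apply: (Rmult_le_reg_r s) => //.
  rewrite /Rdiv Rmult_assoc Rinv_l; last lra.
  have := Rmult_le_compat_l (mu / 2) _ _ (ltac:(lra)) hC.
  by rewrite (_ : mu / 2 * (2 * Cc / mu) = Cc); [lra | field; lra].
rewrite (_ : Cc * (Q ^ d / s) = Cc / s * Q ^ d); last by rewrite /Rdiv; ring.
by apply: Rmult_le_compat_r; lra.
Qed.

Lemma ln_div_ln_near (Q c N : R) (d : nat) :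
  1 < Q -> 1 <= c -> / c * Q ^ d <= N <= c * Q ^ d ->
  Rabs (ln N / ln Q - INR d) <= ln c / ln Q.
Proof.
move=> Q1 c1 [lo hi]; have lnQ := ln_gt0 Q1.
have Qd0 : 0 < Q ^ d by apply: pow_lt; lra.
have c0 : 0 < c by lra.
have ic0 : 0 < / c by apply: Rinv_0_lt_compat.
have := ln_le (Rmult_lt_0_compat _ _ ic0 Qd0) lo.
have := ln_le (Rlt_le_trans _ _ _ (Rmult_lt_0_compat _ _ ic0 Qd0) lo) hi.
rewrite !ln_mult ?ln_Rinv ?ln_pow //; try lra; move=> hhi hlo.
have -> : ln N / ln Q - INR d = (ln N - INR d * ln Q) / ln Q by field; lra.
apply: Rabs_le; rewrite /Rdiv Ropp_mult_distr_l.
have ilnQ : 0 <= / ln Q by apply/Rlt_le/Rinv_0_lt_compat.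
by split; apply: Rmult_le_compat_r; lra.
Qed.

Lemma log_ratio_estimate (P mu Cc N : R) (k d : nat) :
  1 < P -> 0 < mu -> 0 < Cc -> mu <= INR k -> 1 / mu <= INR k ->
  2 * (ln (2 * Cc / mu) / ln P) <= INR k ->
  Rabs (N - mu * (P ^ k) ^ d) <= Cc * Rpower (P ^ k) (INR d - 1 / 2) ->
  Rabs (ln N / ln (P ^ k) - INR d) < 2 / ln P.
Proof.
move=> P1 mu0 C0 muk imuk hCk hN.
have mu_inv : mu * (1 / mu) = 1 by field; lra.
have k1 : 1 <= INR k.
  have : 0 < 1 / mu by apply: Rdiv_lt_0_compat; lra.
  nra.
have lnP := ln_gt0 P1.
have Q1 : 1 < P ^ k by apply: Rlt_pow_R1 => //; apply: INR_lt; rewrite INR_0; lra.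
have Qd0 : 0 < (P ^ k) ^ d by apply: pow_lt; lra.
have hC : 2 * Cc / mu <= Rpower (P ^ k) (1 / 2).
  by apply: Rpower_pow_half_ge => //; apply: Rdiv_lt_0_compat; lra.
have [lo hi] := pow_approx_sandwich (Rlt_trans _ _ _ Rlt_0_1 Q1) mu0 hC hN.
(* The bounds on mu confine N / (P^k)^d to [1 / (2 k), 2 k]. *)
have imu : / (2 * INR k) <= mu / 2.
  apply: (Rmult_le_reg_l (2 * INR k)); first lra.
  by rewrite Rinv_r; nra.
have sandwich : / (2 * INR k) * (P ^ k) ^ d <= N <= 2 * INR k * (P ^ k) ^ d.
  by split; nra.
have c1 : 1 <= 2 * INR k by lra.
apply: (Rle_lt_trans _ _ _ (ln_div_ln_near Q1 c1 sandwich)).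
rewrite ln_pow; last lra.
rewrite (_ : 2 / ln P = 2 * INR k / (INR k * ln P)); last by field; lra.
apply: Rmult_lt_compat_r; first by apply: Rinv_0_lt_compat; nra.
by apply: ln_lt_id; lra.
Qed.

Lemma INR_expn p k : INR (p ^ k)%N = INR p ^ k.
Proof. by elim: k => [|k IH] //=; rewrite expnS -multE mult_INR IH. Qed.

End RealEstimates.

Section Ultrafilter.
Variable U : (nat -> Prop) -> Prop.
Hypothesis HU : ultrafilter U.
Local Open Scope R_scope.

Lemma ultra_mono (A B : nat -> Prop) : U A -> (forall i, A i -> B i) -> U B.
Proof. by case: HU => _ [_ [mono _]]; apply: mono. Qed.

Lemma ultra_and (A B : nat -> Prop) : U A -> U B -> U (fun i => A i /\ B i).
Proof. by case: HU => _ [_ [_ [meet _]]]; apply: meet. Qed.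

Lemma ultra_em (A : nat -> Prop) : U A \/ U (fun i => ~ A i).
Proof. by case: HU => _ [_ [_ [_ em]]]; apply: em. Qed.

Lemma ultra_ex (A : nat -> Prop) : U A -> exists i, A i.
Proof.
move=> UA; apply: NNPP => noA; case: HU => _ [UF _]; apply: UF.
by apply: (ultra_mono UA) => i Ai; apply: noA; exists i.
Qed.

Lemma ultra_not (A : nat -> Prop) : U (fun i => ~ A i) <-> ~ U A.
Proof.
split=> [UnA UA | nUA]; last by case: (ultra_em A).
by have [i []] := ultra_ex (ultra_and UnA UA).
Qed.

Lemma ultra_eqb (b1 b2 : nat -> bool) :
  (U (fun i => b1 i) <-> U (fun i => b2 i)) -> U (fun i => b1 i = b2 i).
Proof.
move=> e; case: (ultra_em (fun i => b1 i)) => h.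
  by apply: (ultra_mono (ultra_and h (proj1 e h))) => i [-> ->].
have h2 : U (fun i => ~ b2 i) by apply/ultra_not => /e; exact: (proj1 (ultra_not _) h).
by apply: (ultra_mono (ultra_and h h2)) => i [/negP/negbTE -> /negP/negbTE ->].
Qed.

Lemma ultra_geq N : nonprincipal U -> U (fun i => N <= i)%N.
Proof.
move=> Hnp; elim: N => [|N IH]; first by case: HU => UT _; exact: (ultra_mono UT).
have /ultra_not neqN := Hnp N.
by apply: (ultra_mono (ultra_and IH neqN)) => i [Ni /eqP iN]; rewrite ltn_neqAle eq_sym iN.
Qed.

Lemma ultra_ex_leq (P : nat -> nat -> Prop) N :
  U (fun i => exists2 d, (d <= N)%N & P d i) -> exists2 d, (d <= N)%N & U (P d).
Proof.
elim: N => [|N IH] h.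
  by exists 0%N => //; apply: (ultra_mono h) => i [d]; rewrite leqn0 => /eqP ->.
case: (ultra_em (P N.+1)) => [hN | nhN]; first by exists N.+1.
have [|d dN hd] := IH; last by exists d => //; apply: leqW.
apply: (ultra_mono (ultra_and h nhN)) => i [[d]]; rewrite leq_eqVlt ltnS.
by case/predU1P => [-> // | dN Pd _]; exists d.
Qed.

Lemma ultra_choice (T : nat -> Type) (P : forall i, T i -> Prop) :
  U (fun i => exists w, P i w) -> (forall i, inhabited (T i)) ->
  exists v : forall i, T i, U (fun i => P i (v i)).
Proof.
move=> h inh; exists (fun i => epsilon (inh i) (P i)).
by apply: (ultra_mono h) => i; apply: epsilon_spec.
Qed.

Lemma ultra_div_ln_lt (c eps : R) :
  nonprincipal U -> 0 <= c -> 0 < eps -> U (fun p => c / ln (INR p) < eps).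
Proof.
move=> Hnp c0 eps0; have [N hN] := INR_unbounded (exp (c / eps)).
apply: (ultra_mono (ultra_geq N Hnp)) => p /leP /le_INR Np.
have lnp : c / eps < ln (INR p).
  by rewrite -[X in X < _]ln_exp; apply: ln_increasing; [apply: exp_pos | lra].
have ceps : 0 <= c / eps by apply: Rmult_le_pos => //; apply/Rlt_le/Rinv_0_lt_compat.
rewrite (_ : eps = eps * ln (INR p) / ln (INR p)); last by field; lra.
apply: Rmult_lt_compat_r; first by apply: Rinv_0_lt_compat; lra.
have := Rmult_lt_compat_l eps _ _ eps0 lnp.
by rewrite (_ : eps * (c / eps) = c); [lra | field; lra].
Qed.

End Ultrafilter.

Lemma pbE (P : Prop) : pb P <-> P.
Proof. by rewrite /pb; case: excluded_middle_informative. Qed.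

Lemma pb_iff (P Q : Prop) : (P <-> Q) -> pb P = pb Q.
Proof. by move=> PQ; apply/idP/idP => /pbE/PQ/pbE. Qed.

Section FrobeniusSubstitution.
Variable K : finFieldType.

Lemma teval_tpow q (e : nat -> ffstr K q) u n : teval e (tpow u n) = (teval e u ^+ n)%R.
Proof. by elim: n => //= n ->; rewrite exprS. Qed.

Lemma teval_tsubp p (e : nat -> K) t :
  teval (S := ffstr K p) e t = teval (S := ffstr K 1) e (tsubp p t).
Proof. by elim: t => //= [s -> u ->|s ->|s -> u ->|s ->] //; rewrite (teval_tpow (q := 1)). Qed.

(* In ffstr K 1 the symbol σ is the identity: this is the ring K, where nsols counts. *)
Lemma holds_fsubp p f (e : nat -> K) :
  holds (S := ffstr K p) e f <-> holds (S := ffstr K 1) e (fsubp p f).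
Proof.
elim: f e => [s t|g IH|g IHg h IHh|j g IH] e /=.
- by rewrite !(teval_tsubp p).
- by rewrite IH.
- by rewrite IHg IHh.
- by split=> [[v /IH hv]|[v /IH hv]]; exists v.
Qed.

End FrobeniusSubstitution.

Lemma tsigfree_tpow u n : tsigfree u -> tsigfree (tpow u n).
Proof. by move=> hu; elim: n => //= n ->; rewrite hu. Qed.

Lemma tsigfree_tsubp p t : tsigfree (tsubp p t).
Proof. by elim: t => //= [s -> u ->|s -> u ->|s /tsigfree_tpow]. Qed.

Lemma fsigfree_fsubp p f : fsigfree (fsubp p f).
Proof. by elim: f => //= [s t|g -> h ->]; rewrite ?tsigfree_tsubp. Qed.

Lemma tvars_tpow u n : {subset tvars (tpow u n) <= tvars u}.
Proof. by elim: n => //= n IH i; rewrite mem_cat => /orP [|/IH]. Qed.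

Lemma tvars_tsubp p t : {subset tvars (tsubp p t) <= tvars t}.
Proof.
elim: t => [j|||s IHs u IHu|s IHs|s IHs u IHu|s IHs] i //=; rewrite ?mem_cat.
- by case/orP => [/IHs -> | /IHu ->]; rewrite ?orbT.
- exact: IHs.
- by case/orP => [/IHs -> | /IHu ->]; rewrite ?orbT.
- by move/tvars_tpow/IHs.
Qed.

Lemma ffv_fsubp p f : {subset ffv (fsubp p f) <= ffv f}.
Proof.
elim: f => //= [s t|g IHg h IHh|j g IH] i; rewrite ?mem_cat ?mem_filter.
- by case/orP => [/tvars_tsubp -> | /tvars_tsubp ->]; rewrite ?orbT.
- by case/orP => [/IHg -> | /IHh ->]; rewrite ?orbT.
- by case/andP => -> /IH.
Qed.

Lemma fv_below_fsubp N p f : fv_below N f -> fv_below N (fsubp p f).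
Proof. by move=> /allP fN; apply/allP => i /ffv_fsubp /fN. Qed.

Definition realisations (K : finFieldType) (p : nat) (phi : Lform) (n m : nat)
    (a : 'I_m -> K) : {set {ffun 'I_n -> K}} :=
  [set x : {ffun 'I_n -> K} | pb (holds (S := ffstr K p) (env_xy 0%R x a) phi)].

Lemma realisations_fsubp (K : finFieldType) p phi n m (a : 'I_m -> K) :
  realisations p phi n a = realisations 1 (fsubp p phi) n a.
Proof. by apply/setP => x; rewrite !inE; apply/pb_iff/holds_fsubp. Qed.

Section Ultraproduct.
Variable U : (nat -> Prop) -> Prop.
Hypothesis HU : ultrafilter U.
Variable K : nat -> finFieldType.

Lemma teval_ultraprod (e : nat -> ultraprod U K) t p :
  teval e t p = teval (S := ffstr (K p) p) (fun i => e i p) t.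
Proof. by elim: t => //= [s -> u ->|s ->|s -> u ->|s ->]. Qed.

Theorem holds_ultraprod f (e : nat -> ultraprod U K) :
  holds e f <-> U (fun p => holds (S := ffstr (K p) p) (fun i => e i p) f).
Proof.
elim: f e => [s t|g IH|g IHg h IHh|j g IH] e /=.
- by split=> h; apply: (ultra_mono HU h) => p; rewrite !teval_ultraprod.
- by rewrite IH (ultra_not HU).
- rewrite IHg IHh; split=> [[hg hh] | hgh]; first exact: ultra_and.
  by split; apply: (ultra_mono HU hgh) => p [].
- have upd v p : (fun i => (if i == j then v else e i) p) =
                 (fun i => if i == j then v p else e i p).
    by apply: functional_extensionality => i; case: (i == j).
  split=> [[v /IH hv] | hU].
    by apply: (ultra_mono HU hv) => p; rewrite upd; exists (v p).
  have [v hv] := ultra_choice HU hU (fun p => inhabits 0%R).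
  by exists v; apply/IH; apply: (ultra_mono HU hv) => p; rewrite upd.
Qed.

Lemma internal_rep_realisations n m phi (a : 'I_m -> ultraprod U K)
    (A : ('I_n -> ultraprod U K) -> Prop) :
  (forall x, A x <-> holds (env_xy (s_zero (ultraprod U K)) x a) phi) ->
  internal_rep A (fun p => realisations p phi n (fun j => a j p)).
Proof.
move=> HA x; rewrite HA holds_ultraprod.
have env p : (fun i => env_xy (s_zero (ultraprod U K)) x a i p) =
             env_xy 0%R [ffun i => x i p] (fun j => a j p).
  apply: functional_extensionality => i; rewrite /env_xy.
  by case: (insub i) => [j|]; [rewrite ffunE | case: (insub (i - n))].
by split=> h; apply: (ultra_mono HU h) => p; rewrite env inE => /pbE.
Qed.

Lemma internal_rep_unique n (A : ('I_n -> ultraprod U K) -> Prop) D1 D2 :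
  internal_rep A D1 -> internal_rep A D2 -> U (fun p => D1 p = D2 p).
Proof.
move=> h1 h2.
pose w p := odflt [ffun=> 0%R] [pick x | (x \in D1 p) != (x \in D2 p)].
have wP p : D1 p <> D2 p -> (w p \in D1 p) != (w p \in D2 p).
  rewrite /w; case: pickP => [x -> // | same]; case.
  by apply/setP => x; apply/eqP/negbFE/same.
(* X separates D1 p from D2 p wherever they differ, yet A X decides both memberships alike. *)
pose X : 'I_n -> ultraprod U K := fun i p => w p i.
have XE p : [ffun i => X i p] = w p by apply/ffunP => i; rewrite ffunE.
have memX D : internal_rep A D -> A X <-> U (fun p => w p \in D p).
  by move=> hD; rewrite hD; split=> h; apply: (ultra_mono HU h) => p; rewrite XE.
have same : U (fun p => (w p \in D1 p) = (w p \in D2 p)).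
  by apply: (ultra_eqb HU); apply: iff_trans (iff_sym (memX _ h1)) (memX _ h2).
case: (ultra_em HU (fun p => D1 p = D2 p)) => // neq.
by have [p [eqw /wP]] := ultra_ex HU (ultra_and HU same neq); rewrite eqw eqxx.
Qed.

Lemma delta_F_eq_congr n (D1 D2 : forall p, {set {ffun 'I_n -> K p}}) r :
  U (fun p => D1 p = D2 p) -> delta_F_eq U D1 r -> delta_F_eq U D2 r.
Proof.
move=> e h eps /h h1.
by apply: (ultra_mono HU (ultra_and HU e h1)) => p [<-].
Qed.

End Ultraproduct.

Section PseudofiniteDimension.
Local Open Scope R_scope.
Variables (C : Lform -> nat -> nat -> R) (D : Lform -> nat -> nat -> seq (nat * R)).
Hypothesis HCD : CDM_constants C D.

Lemma log_card_realisations_near_int (F : finFieldType) (p k : nat) phi n m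
    (a : 'I_m -> F) :
  prime p -> #|F| = (p ^ k)%N -> k_large C D k p ->
  fv_below (n + m) phi -> (fsize phi <= p)%N -> (0 < #|realisations p phi n a|)%N ->
  exists2 d, (d <= n)%N &
    Rabs (ln (INR #|realisations p phi n a|) / ln (INR #|F|) - INR d) < 2 / ln (INR p).
Proof.
move=> pp cardF hk hfv hsize.
have [C0 [Dpos Dapprox]] := HCD (fsigfree_fsubp p phi) (fv_below_fsubp p hfv).
rewrite realisations_fsubp => /(Dapprox F a) [d [mu [hin happrox]]].
have [dn mu0] := Dpos _ _ hin.
have [muk [imuk hCk]] := hk phi n m hfv hsize mu (ex_intro _ d hin).
exists d => //; rewrite cardF INR_expn in happrox *.
apply: log_ratio_estimate happrox => //.
by apply: lt_1_INR; apply/ltP; apply: prime_gt1.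
Qed.

Variables (K : nat -> finFieldType) (k : nat -> nat).
Hypothesis Hcard : forall p, prime p -> #|K p| = (p ^ k p)%N.
Hypothesis Hk : forall p, prime p -> k_large C D (k p) p.
Variable U : (nat -> Prop) -> Prop.
Hypotheses (HU : ultrafilter U) (Hnp : nonprincipal U) (HP : U (fun p => prime p)).

Lemma delta_F_realisations_nat n m phi (a : 'I_m -> ultraprod U K) :
  fv_below (n + m) phi -> U (fun p => 0 < #|realisations p phi n (fun j => a j p)|)%N ->
  exists d : nat, delta_F_eq U (fun p => realisations p phi n (fun j => a j p)) (INR d).
Proof.
move=> Hfv Hpos.
have [d _ Hd] : exists2 d, (d <= n)%N & U (fun p =>
    Rabs (ln (INR #|realisations p phi n (fun j => a j p)|) / ln (INR #|K p|) - INR d)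
      < 2 / ln (INR p)).
  apply: (ultra_ex_leq HU).
  apply: (ultra_mono HU (ultra_and HU (ultra_and HU HP (ultra_geq HU (fsize phi) Hnp)) Hpos)).
  move=> p [[Hp Hsize] Hposp].
  exact: log_card_realisations_near_int Hp (Hcard Hp) (Hk Hp) Hfv Hsize Hposp.
exists d => eps Heps.
have Hsmall := ultra_div_ln_lt HU Hnp (ltac:(lra) : 0 <= 2) Heps.
by apply: (ultra_mono HU (ultra_and HU Hd Hsmall)) => p [Hp Hs]; lra.
Qed.

End PseudofiniteDimension.

Theorem theorem2p10
  (C : Lform -> nat -> nat -> R) (D : Lform -> nat -> nat -> seq (nat * R))
  (HCD : CDM_constants C D)
  (K : nat -> finFieldType) (k : nat -> nat)
  (Hcard : forall p, prime p -> #|K p| = (p ^ k p)%N)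
  (Hk : forall p, prime p -> k_large C D (k p) p)
  (U : (nat -> Prop) -> Prop) (HU : ultrafilter U) (Hnp : nonprincipal U)
  (HP : U (fun p => prime p))
  (n : nat) (A : ('I_n -> ultraprod U K) -> Prop)
  (HA : definable A) (Hne : exists x, A x) :
  (exists Dset, internal_rep A Dset) /\
  (forall Dset, internal_rep A Dset -> exists z : Z, delta_F_eq U Dset (IZR z)).
Proof.
have [phi [m [a [Hfv HAphi]]]] := HA.
have HDphi := internal_rep_realisations HU HAphi.
split; first by eexists; exact: HDphi.
move=> Dset HDset.
have Hpos : U (fun p => 0 < #|realisations p phi n (fun j => a j p)|)%N.
  have [x /HDphi Hx] := Hne.
  by apply: (ultra_mono HU Hx) => p Hxp; apply/card_gt0P; exists [ffun i => x i p].
have [d Hd] := delta_F_realisations_nat HCD Hcard Hk HU Hnp HP Hfv Hpos.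
exists (Z.of_nat d); rewrite -INR_IZR_INZ.
exact: (delta_F_eq_congr HU (internal_rep_unique HU HDphi HDset) Hd).
Qed.
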